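(* Let $S$ be a finite (possibly empty) set of rational primes. Then the action of $\Gamma_S$ on $\mathfrak{X}_S$ is vertex transitive: for every vertex $v$ of $\mathfrak{X}_S$ there is $\gamma\in\Gamma_S$ with $\gamma\, v_0 = v$. Consequently the action of $\overline{\Gamma}_S$ on $\mathfrak{X}_S$ is vertex transitive as well.
   Context: Let $\mathcal{H}$ be the quaternion algebra over $\mathbb{Q}$ with basis $1, I, J, IJ$ and relations $I^2=J^2=-1$, $IJ=-JI$, with reduced norm $\mathrm{Nm}(a+bI+cJ+dIJ)=a^2+b^2+c^2+d^2$. Let $\mathcal{O}$ be the Hurwitz order, the $\mathbb{Z}$-span of $1, I, J, \tfrac12(1+I+J+IJ)$. For a finite set $S$ of primes, let $\mathbb{Z}_S=\mathbb{Z}[1/p : p\in S]$, $m_S=\prod_{p\in S}p$, $\mathcal{O}_S=\mathcal{O}\otimes_{\mathbb{Z}}\mathbb{Z}_S$, $\Gamma_S=\mathcal{O}_S^*$ (the $S$-unit group), and $\overline{\Gamma}_S=\Gamma_S/\mathbb{Z}_S^*$ (units modulo central scalars). For each odd prime $p$ fix an isomorphism $\mathcal{H}\otimes_{\mathbb{Q}}\mathbb{Q}_p\cong \mathrm{M}_2(\mathbb{Q}_p)$ carrying $\mathcal{O}\otimes_{\mathbb{Z}}\mathbb{Z}_p$ onto $\mathrm{M}_2(\mathbb{Z}_p)$; let $\mathfrak{X}_p$ be the Bruhat–Tits tree of $\mathrm{PGL}_2(\mathbb{Q}_p)$ (vertices are homothety classes of $\mathbb{Z}_p$-lattices in $\mathbb{Q}_p^2$,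 two classes adjacent when representatives $L'\subset L$ satisfy $L/L'\cong \mathbb{Z}/p$), on which $\Gamma_S$ acts through $\mathcal{H}^*\subset \mathrm{GL}_2(\mathbb{Q}_p)$, and let $v_{0,p}$ be the class of $\mathbb{Z}_p\oplus\mathbb{Z}_p$. For $p=2$, let $\mathfrak{X}_2$ be a single point $v_{0,2}$ with trivial action. Put $\mathfrak{X}_S=\prod_{p\in S}\mathfrak{X}_p$ with the diagonal action of $\Gamma_S$ (scalars act trivially, so $\overline{\Gamma}_S$ acts); a vertex of $\mathfrak{X}_S$ is a tuple of vertices of the factors, and $v_0=(v_{0,p})_{p\in S}$. *)

From HB Require Import structures.
From mathcomp Require Import all_boot all_order all_algebra.
Set Implicit Arguments. Unset Strict Implicit. Unset Printing Implicit Defensive.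
Import Order.TTheory GRing.Theory Num.Theory.
Local Open Scope ring_scope.

Record quat := Quat { q0 : rat; q1 : rat; q2 : rat; q3 : rat }.

Definition qadd (a b : quat) : quat :=
  Quat (q0 a + q0 b) (q1 a + q1 b) (q2 a + q2 b) (q3 a + q3 b).
Definition qscale (r : rat) (a : quat) : quat :=
  Quat (r * q0 a) (r * q1 a) (r * q2 a) (r * q3 a).
(* Hamilton product: I^2 = J^2 = -1, IJ = -JI *)
Definition qmul (a b : quat) : quat :=
  Quat (q0 a * q0 b - q1 a * q1 b - q2 a * q2 b - q3 a * q3 b)
       (q0 a * q1 b + q1 a * q0 b + q2 a * q3 b - q3 a * q2 b)
       (q0 a * q2 b - q1 a * q3 b + q2 a * q0 b + q3 a * q1 b)
       (q0 a * q3 b + q1 a * q2 b - q2 a * q1 b + q3 a * q0 b).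
Definition qone : quat := Quat 1 0 0 0.
Definition qI : quat := Quat 0 1 0 0.
Definition qJ : quat := Quat 0 0 1 0.
Definition qIJ : quat := qmul qI qJ.
Definition qnorm (a : quat) : rat := q0 a ^+ 2 + q1 a ^+ 2 + q2 a ^+ 2 + q3 a ^+ 2.
Definition qomega : quat :=
  qscale (2%:R)^-1 (qadd (qadd qone qI) (qadd qJ qIJ)).

Definition qcomb (a b c d : rat) : quat :=
  qadd (qadd (qscale a qone) (qscale b qI)) (qadd (qscale c qJ) (qscale d qomega)).

Definition in_O (x : quat) : Prop :=
  exists a b c d : int, x = qcomb a%:~R b%:~R c%:~R d%:~R.

Definition mS (S : seq nat) : nat := \prod_(p <- S) p.
Definition in_ZS (S : seq nat) (r : rat) : Prop :=
  exists (k : nat) (z : int), r = z%:~R / ((mS S ^ k)%N)%:R.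

(* O_S = O (x)_Z Z_S, i.e. the Z_S-span of the Z-basis 1, I, J, omega of O *)
Definition in_OS (S : seq nat) (x : quat) : Prop :=
  exists a b c d : rat, [/\ in_ZS S a, in_ZS S b, in_ZS S c & in_ZS S d] /\
    x = qcomb a b c d.

Definition in_Gamma (S : seq nat) (x : quat) : Prop :=
  in_OS S x /\ exists y, in_OS S y /\ qmul x y = qone /\ qmul y x = qone.

(* ---------- Q_p, axiomatically ----------
   (K, R) is a field K with a subring R such that R is a complete discrete
   valuation ring with uniformizer p and residue field Z/p.  Such a pair is
   isomorphic to (Q_p, Z_p) (unique up to unique isomorphism). *)
Definition padic_field (p : nat) (K : fieldType) (R : K -> Prop) : Prop :=
  [/\ R 1 /\ (forall x y, R x -> R y -> R (x - y)) /\ (forall x y, R x -> R y -> R (x * y)),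
      (p%:R : K) != 0 /\ ~ R (p%:R)^-1,
      (forall x : K, x != 0 -> exists (k : int) (u : K), [/\ R u, R u^-1 & x = (p%:R) ^ k * u]),
      (forall x, R x -> exists n : nat, R ((x - n%:R) / p%:R)) &
      (forall s : nat -> K, (forall n, R (s n)) ->
         (forall n, R ((s n.+1 - s n) / (p%:R ^+ n))) ->
         exists x, forall n, R ((x - s n) / (p%:R ^+ n)))].

Definition Rmx (K : fieldType) (R : K -> Prop) m n (A : 'M[K]_(m, n)) : Prop :=
  forall i j, R (A i j).

(* iota : H -> M_2(K) is the restriction to H of an isomorphism
   H (x) Q_p ~= M_2(Q_p) carrying O (x) Z_p onto M_2(Z_p): a unital ring
   homomorphism (hence Q-linear) such that the K-linear extension maps the
   R-span of the Z-basis 1, I, J, omega of O onto M_2(R). *)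
Definition split_iso (K : fieldType) (R : K -> Prop) (iota : quat -> 'M[K]_2) : Prop :=
  [/\ iota qone = 1,
      (forall x y, iota (qadd x y) = iota x + iota y),
      (forall x y, iota (qmul x y) = iota x * iota y),
      (forall x, in_O x -> Rmx R (iota x)) &
      (forall M : 'M[K]_2, Rmx R M ->
         exists a b c d, [/\ R a, R b, R c & R d] /\
           M = a *: iota qone + b *: iota qI + c *: iota qJ + d *: iota qomega)].

Definition lattice_of (K : fieldType) (R : K -> Prop) (g : 'M[K]_2) : 'cV[K]_2 -> Prop :=
  fun v => exists u : 'cV[K]_2, Rmx R u /\ v = g *m u.

Definition is_lattice (K : fieldType) (R : K -> Prop) (L : 'cV[K]_2 -> Prop) : Prop :=
  exists g : 'M[K]_2, g \in unitmx /\ forall v, L v <-> lattice_of R g v.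

(* standard lattice R^2, representing v_{0,p} *)
Definition std_lattice (K : fieldType) (R : K -> Prop) := lattice_of R 1.

Definition mx_image (K : fieldType) (A : 'M[K]_2) (L : 'cV[K]_2 -> Prop) : 'cV[K]_2 -> Prop :=
  fun v => exists w, L w /\ v = A *m w.

(* same vertex of the tree = homothetic lattices *)
Definition homothetic (K : fieldType) (L L' : 'cV[K]_2 -> Prop) : Prop :=
  exists c : K, c != 0 /\ forall v, L' v <-> exists w, L w /\ v = c *: w.

From HB Require Import structures.
From mathcomp Require Import all_boot all_order all_algebra.
From mathcomp Require Import ring lra.
From Stdlib Require Import Classical IndefiniteDescription.
Set Implicit Arguments. Unset Strict Implicit. Unset Printing Implicit Defensive.
Import Order.TTheory GRing.Theory Num.Theory.
Local Open Scope ring_scope.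

(* Every lattice [L_p] is [c_p G_p Z_p^2] with [G_p] integral and [G_p H_p = p^(e_p)] for an
   integral [H_p].  By the Chinese remainder theorem some [y] in the Hurwitz order [O] satisfies
   [iota_p y = G_p] modulo [N = prod p^(e_p)] for all [p] at once.  The elements of [O] lying
   locally in [G_p M_2(Z_p)] form a right ideal containing [y] and [N]; as [O] is right Euclidean
   it is generated by some [x].  Then [iota_p x M_2(Z_p) = G_p M_2(Z_p)], so [x] maps [v_0] to the
   class of [L_p], and [x] divides [N], so its reduced norm is an [S]-unit and [x] lies in
   [Gamma_S].  Central scalars act on the tree by homotheties. *)

(** * Quaternions and the Hurwitz order *)

Definition qzero : quat := Quat 0 0 0 0.
Definition qneg (x : quat) : quat := Quat (- q0 x) (- q1 x) (- q2 x) (- q3 x).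
Definition qsub (x y : quat) : quat := qadd x (qneg y).
Definition qconj (x : quat) : quat := Quat (q0 x) (- q1 x) (- q2 x) (- q3 x).
Definition qrat (r : rat) : quat := Quat r 0 0 0.

Ltac quat_ring :=
  intros; repeat match goal with x : quat |- _ => destruct x end;
  unfold qsub, qmul, qadd, qneg, qscale, qconj, qrat, qnorm, qzero; simpl;
  try congr Quat; ring.

Lemma qmulA a b c : qmul a (qmul b c) = qmul (qmul a b) c. Proof. quat_ring. Qed.
Lemma qmulBr a b c : qmul a (qsub b c) = qsub (qmul a b) (qmul a c). Proof. quat_ring. Qed.
Lemma qnormM a b : qnorm (qmul a b) = qnorm a * qnorm b. Proof. quat_ring. Qed.
Lemma qmul_conjr a : qmul a (qconj a) = qrat (qnorm a). Proof. quat_ring. Qed.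
Lemma qmul_conjl a : qmul (qconj a) a = qrat (qnorm a). Proof. quat_ring. Qed.
Lemma qmul_scaler r a b : qmul a (qscale r b) = qscale r (qmul a b). Proof. quat_ring. Qed.
Lemma qmul_scalel r a b : qmul (qscale r a) b = qscale r (qmul a b). Proof. quat_ring. Qed.
Lemma qscaleA r s a : qscale r (qscale s a) = qscale (r * s) a. Proof. quat_ring. Qed.
Lemma qscaleE r a : qscale r a = qmul (qrat r) a. Proof. quat_ring. Qed.
Lemma qscale1 a : qscale 1 a = a. Proof. quat_ring. Qed.
Lemma qsubK a b : qadd (qsub a b) b = a. Proof. quat_ring. Qed.
Lemma qadd0 a : qadd qzero a = a. Proof. quat_ring. Qed.
Lemma qratM r s : qmul (qrat r) (qrat s) = qrat (r * s). Proof. quat_ring. Qed.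
Lemma qnorm_rat r : qnorm (qrat r) = r ^+ 2. Proof. quat_ring. Qed.

Lemma qnorm_ge0 a : 0 <= qnorm a.
Proof. by case: a => a b c d; rewrite /qnorm /= !addr_ge0 ?sqr_ge0. Qed.

Lemma qnorm_eq0 a : qnorm a = 0 -> a = qzero.
Proof.
case: a => a b c d; rewrite /qnorm /qzero /= => h.
have sq0 (t : rat) : t ^+ 2 <= 0 -> t = 0.
  by move=> ?; apply/eqP; rewrite -sqrf_eq0 eq_le sqr_ge0 andbT.
have := sqr_ge0 a; have := sqr_ge0 b; have := sqr_ge0 c; have := sqr_ge0 d => *.
by rewrite (sq0 a) 1?(sq0 b) 1?(sq0 c) 1?(sq0 d) //; lra.
Qed.

(* Coordinates of [qcomb a b c d] in the basis [1, I, J, IJ]. *)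
Definition hurwitz (a b c d : int) : quat :=
  Quat (a%:~R + d%:~R / 2) (b%:~R + d%:~R / 2) (c%:~R + d%:~R / 2) (d%:~R / 2).

Lemma qcombE a b c d : qcomb a b c d = Quat (a + d / 2) (b + d / 2) (c + d / 2) (d / 2).
Proof. by rewrite /qcomb /qomega /qIJ /qadd /qscale /qmul /qone /qI /qJ /=; congr Quat; field. Qed.

Lemma in_OE x : in_O x <-> exists a b c d : int, x = hurwitz a b c d.
Proof. by split; move=> [a [b [c [d ->]]]]; exists a, b, c, d; rewrite qcombE. Qed.

Lemma in_O_sub x y : in_O x -> in_O y -> in_O (qsub x y).
Proof.
move=> /in_OE [a [b [c [d ->]]]] /in_OE [a' [b' [c' [d' ->]]]]; apply/in_OE.
exists (a - a'), (b - b'), (c - c'), (d - d').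
by rewrite /hurwitz /qsub /qneg /qadd /= !intrB; congr Quat; field.
Qed.

Lemma in_O_mul x y : in_O x -> in_O y -> in_O (qmul x y).
Proof.
move=> /in_OE [a [b [c [d ->]]]] /in_OE [a' [b' [c' [d' ->]]]]; apply/in_OE.
exists (a * a' - b * b' - b * d' - c * c' - c' * d - d * d' - b * c' + b' * c),
  (a * b' + b' * d + a' * b + c * d' - c' * d - b * c' + b' * c),
  (a * c' - b * d' + a' * c + c * d' + b' * d - b * c' + b' * c),
  (a * d' + d * d' + 2 * b * c' + b * d' + c' * d + a' * d - 2 * b' * c - c * d' - b' * d).
by rewrite /hurwitz /qmul /=; congr Quat; field.
Qed.

Lemma in_O_conj x : in_O x -> in_O (qconj x).
Proof.
move=> /in_OE [a [b [c [d ->]]]]; apply/in_OE.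
by exists (a + d), (- b), (- c), (- d); rewrite /hurwitz /qconj /=; congr Quat; field.
Qed.

Lemma in_O_int (z : int) : in_O (qrat z%:~R).
Proof. by apply/in_OE; exists z, 0, 0, 0; rewrite /hurwitz /qrat; congr Quat; field. Qed.

Lemma in_O_basis : [/\ in_O qone, in_O qI, in_O qJ & in_O qomega].
Proof.
split; [exists 1, 0, 0, 0 | exists 0, 1, 0, 0 | exists 0, 0, 1, 0 | exists 0, 0, 0, 1];
by rewrite !qcombE /qomega /qscale /qadd /qIJ /qmul /qone /qI /qJ /=; congr Quat; field.
Qed.

Lemma qnorm_in_O x : in_O x -> exists n : nat, qnorm x = n%:R.
Proof.
move=> /in_OE [a [b [c [d ->]]]].
pose z : int := a ^+ 2 + b ^+ 2 + c ^+ 2 + d * (a + b + c) + d ^+ 2.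
have ez : qnorm (hurwitz a b c d) = z%:~R by rewrite /qnorm /hurwitz /z /=; field.
have : (0 : rat) <= z%:~R by rewrite -ez qnorm_ge0.
by rewrite ler0z; case: z ez => // n ez _; exists n.
Qed.

Lemma round_rat (x : rat) : exists r : int, - (1 / 2) <= x - r%:~R < 1 / 2.
Proof.
exists (Num.floor (x + 1 / 2)).
by have /andP[] := floor_itv (x + 1 / 2); rewrite intrD => lo hi; apply/andP; split; lra.
Qed.

(* Rounding every coordinate gives an error of norm at most 1, with equality only when all four
   errors are -1/2; but then [q] itself has half-integral coordinates of equal parity. *)
Lemma hurwitz_round q : exists h, in_O h /\ qnorm (qsub q h) < 1.
Proof.
case: q => x0 x1 x2 x3.
have [r0 /andP[lo0 hi0]] := round_rat x0; have [r1 /andP[lo1 hi1]] := round_rat x1.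
have [r2 /andP[lo2 hi2]] := round_rat x2; have [r3 /andP[lo3 hi3]] := round_rat x3.
have [/and4P[/eqP e0 /eqP e1 /eqP e2 /eqP e3]|not_all_half] :=
  boolP [&& x0 - r0%:~R == - (1 / 2), x1 - r1%:~R == - (1 / 2),
            x2 - r2%:~R == - (1 / 2) & x3 - r3%:~R == - (1 / 2)].
  exists (Quat x0 x1 x2 x3); split; last by rewrite /qnorm /qsub /qneg /qadd /= !subrr; lra.
  apply/in_OE; exists (r0 - r3), (r1 - r3), (r2 - r3), (2 * r3 - 1).
  by rewrite /hurwitz; congr Quat; rewrite !intrD !intrM ?intrN /=; lra.
exists (Quat r0%:~R r1%:~R r2%:~R r3%:~R); split.
  apply/in_OE; exists (r0 - r3), (r1 - r3), (r2 - r3), (2 * r3).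
  by rewrite /hurwitz; congr Quat; field.
rewrite /qnorm /qsub /qneg /qadd /=.
move: not_all_half lo0 hi0 lo1 hi1 lo2 hi2 lo3 hi3.
move: (x0 - r0%:~R) (x1 - r1%:~R) (x2 - r2%:~R) (x3 - r3%:~R) => e0 e1 e2 e3.
have sq_le (e : rat) : - (1 / 2) <= e -> e < 1 / 2 -> e ^+ 2 <= 1 / 4 by move=> *; nra.
have sq_lt (e : rat) : - (1 / 2) <= e -> e < 1 / 2 -> e != - (1 / 2) -> e ^+ 2 < 1 / 4.
  move=> lo hi ne; have : - (1 / 2) < e by rewrite lt_def ne lo.
  by move=> *; nra.
move=> not_all_half lo0 hi0 lo1 hi1 lo2 hi2 lo3 hi3.
have := sq_le _ lo0 hi0; have := sq_le _ lo1 hi1; have := sq_le _ lo2 hi2; have := sq_le _ lo3 hi3.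
move: not_all_half => /nandP[ne|/nandP[ne|/nandP[ne|ne]]];
  [have := sq_lt _ lo0 hi0 ne | have := sq_lt _ lo1 hi1 ne
   | have := sq_lt _ lo2 hi2 ne | have := sq_lt _ lo3 hi3 ne]; lra.
Qed.

Lemma hurwitz_division x y :
  x <> qzero -> exists h, in_O h /\ qnorm (qsub y (qmul x h)) < qnorm x.
Proof.
move=> x0; have nx0 : qnorm x != 0 by apply/eqP => /qnorm_eq0.
pose q := qscale (qnorm x)^-1 (qmul (qconj x) y).
have xq : qmul x q = y by rewrite /q qmul_scaler qmulA qmul_conjr -qscaleE qscaleA mulVf // qscale1.
have [h [Oh small]] := hurwitz_round q.
exists h; split=> //.
rewrite -xq -qmulBr qnormM -[X in _ < X]mulr1 ltr_pM2l //.
by rewrite lt_def nx0 qnorm_ge0.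
Qed.

(* A nonzero element of minimal norm generates; classically, by strong induction on the norm. *)
Lemma hurwitz_ideal_principal (I : quat -> Prop) y0 :
  (forall y, I y -> in_O y) ->
  (forall y z, I y -> I z -> I (qsub y z)) ->
  (forall y h, I y -> in_O h -> I (qmul y h)) ->
  I y0 -> y0 <> qzero ->
  exists x, I x /\ forall y, I y -> exists h, in_O h /\ y = qmul x h.
Proof.
move=> IO Isub Imul Iy0 y00.
have [n ny0] := qnorm_in_O (IO _ Iy0).
elim/ltn_ind: n y0 Iy0 y00 ny0 => n IH x Ix x0 nx.
case: (classic (exists y, I y /\ ~ exists h, in_O h /\ y = qmul x h)) => [[y [Iy not_mul]]|none];
  last by exists x; split=> // y Iy; apply: NNPP => not_mul; apply: none; exists y.
have [h [Oh lt]] := hurwitz_division y x0.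
have Ir : I (qsub y (qmul x h)) by apply: Isub => //; apply: Imul.
have [m nr] := qnorm_in_O (IO _ Ir).
apply: (IH m _ _ Ir _ nr); first by rewrite -(ltr_nat rat) -nr -nx.
by move=> r0; apply: not_mul; exists h; split=> //; rewrite -(qsubK y (qmul x h)) r0 qadd0.
Qed.

(** * S-units *)

Lemma mS_gt0 S : (forall p, p \in S -> prime p) -> (0 < mS S)%N.
Proof. by move=> Sp; rewrite /mS big_seq prodn_cond_gt0 // => p /Sp /prime_gt0. Qed.

Lemma dvdn_prod_mS (S T : seq nat) (e : nat -> nat) : {subset T <= S} ->
  (\prod_(q <- T) q ^ e q %| mS S ^ (\sum_(q <- T) e q))%N.
Proof.
elim: T => [|q T IH] TS; first by rewrite big_nil.
rewrite !big_cons expnD dvdn_mul ?dvdn_exp2r //.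
  by rewrite /mS (big_rem q) ?dvdn_mulr // TS ?mem_head.
by apply: IH => r rT; apply: TS; rewrite inE rT orbT.
Qed.

Lemma in_ZS_int S (z : int) : in_ZS S z%:~R.
Proof. by exists 0%N, z; rewrite expn0 divr1. Qed.

Lemma in_ZS_div S (z : int) (n k : nat) :
  (0 < mS S)%N -> (n %| mS S ^ k)%N -> in_ZS S (z%:~R / n%:R).
Proof.
move=> mS0 /dvdnP [m em]; exists k, (z * m%:Z).
have := expn_gt0 (mS S) k; rewrite mS0 em muln_gt0 => /andP [m0 n0].
by rewrite natrM intrM; field; rewrite !pnatr_eq0 -!lt0n m0 n0.
Qed.

Lemma qscale_comb r a b c d : qscale r (qcomb a b c d) = qcomb (r * a) (r * b) (r * c) (r * d).
Proof. by rewrite !qcombE /qscale /=; congr Quat; field. Qed.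

(* The inverse of [x] is [conj x / nrd x]. *)
Lemma hurwitz_S_unit S x n k : (0 < mS S)%N -> in_O x -> qnorm x = n%:R ->
  (n %| mS S ^ k)%N -> in_Gamma S x.
Proof.
move=> mS0 Ox nx ndvd.
have n0 : (n%:R : rat) != 0.
  by rewrite pnatr_eq0; apply: contraTneq ndvd => ->; rewrite dvd0n -lt0n expn_gt0 mS0.
have [[a [b [c [d ex]]]] [a' [b' [c' [d' ex']]]]] := (Ox, in_O_conj Ox).
split; first by exists a%:~R, b%:~R, c%:~R, d%:~R; split=> //; split; apply: in_ZS_int.
exists (qscale n%:R^-1 (qconj x)); split; last split.
- rewrite ex' qscale_comb; do 4 eexists; split; last reflexivity.
  by split; rewrite mulrC; apply: (in_ZS_div _ mS0 ndvd).
- by rewrite qmul_scaler qmul_conjr nx /qscale /qrat /qone /=; congr Quat; field.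
- by rewrite qmul_scalel qmul_conjl nx /qscale /qrat /qone /=; congr Quat; field.
Qed.

(** * Lattices over a p-adic field *)

Section PadicField.
Variables (p : nat) (K : fieldType) (R : K -> Prop).
Hypothesis pR : padic_field p R.
Local Notation pK := (p%:R : K).

Lemma R1 : R 1. Proof. by case: pR => [[]]. Qed.
Lemma RB x y : R x -> R y -> R (x - y). Proof. by case: pR => [[_ []]]; auto. Qed.
Lemma RM x y : R x -> R y -> R (x * y). Proof. by case: pR => [[_ []]]; auto. Qed.
Lemma p_neq0 : pK != 0. Proof. by case: pR => _ []. Qed.

Lemma R0 : R 0. Proof. by rewrite -(subrr 1); apply: RB R1 R1. Qed.
Lemma RN x : R x -> R (- x). Proof. by move=> Rx; rewrite -sub0r; apply: RB R0 Rx. Qed.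
Lemma RD x y : R x -> R y -> R (x + y).
Proof. by move=> Rx Ry; rewrite -(opprK y); apply: RB Rx (RN Ry). Qed.

Lemma Rnat n : R n%:R.
Proof. by elim: n => [|n IH]; [apply: R0 | rewrite -addn1 natrD; apply: RD IH R1]. Qed.

Lemma RX x n : R x -> R (x ^+ n).
Proof. by move=> Rx; elim: n => [|n IH]; [rewrite expr0; apply: R1 | rewrite exprS; apply: RM]. Qed.

Lemma Rsum (I : Type) (s : seq I) (F : I -> K) : (forall i, R (F i)) -> R (\sum_(i <- s) F i).
Proof. by move=> RF; apply: (big_ind R) => //; [exact: R0 | exact: RD]. Qed.

Lemma unit_of_bezout x s t : R x -> R s -> R t -> x * s + pK * t = 1 -> x != 0 /\ R x^-1.
Proof.
move=> Rx Rs Rt e; case: pR => _ [_ not_R_pinv] val _ _.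
have x0 : x != 0.
  apply: contraPneq not_R_pinv => x0; move: e; rewrite x0 mul0r add0r => e.
  suff -> : pK^-1 = t by [].
  by apply: (mulfI p_neq0); rewrite mulfV ?p_neq0 // e.
split=> //; have [[n|n] [u [Ru Rui ex]]] := val x x0; rewrite ex.
- case: n ex => [|n] ex; first by rewrite expr0z mul1r.
  (* [x] divisible by [p] would make [p^-1 = p^n u s + t] integral *)
  exfalso; apply: not_R_pinv; suff -> : pK^-1 = pK ^+ n * u * s + t.
    by apply: RD Rt; apply: RM Rs; apply: RM Ru; apply: RX (Rnat _).
  move: e; rewrite ex -exprnP => e.
  by apply: (mulfI p_neq0); rewrite mulfV ?p_neq0 // mulrDr !mulrA -exprS e.
- by rewrite NegzE -exprnN invfM invrK; apply: RM => //; apply: RX (Rnat _).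
Qed.

Lemma coprime_unit m : coprime p m -> (m%:R : K) != 0 /\ R (m%:R)^-1.
Proof.
move=> cpm; have p0 : (0 < p)%N by rewrite lt0n; apply: contraNneq p_neq0 => ->.
have [a _] := Bezoutl m p0; rewrite (eqP cpm) => /dvdnP [k ek].
apply: (unit_of_bezout (Rnat m) (RN (Rnat a)) (Rnat k)).
have : ((1 + a * m)%:R : K) = (k * p)%:R by rewrite ek.
by rewrite natrD !natrM => e; rewrite [_ * k%:R]mulrC -e; ring.
Qed.

Lemma exists_pow_R x : exists k : nat, R (pK ^+ k * x).
Proof.
have [->|x0] := eqVneq x 0; first by exists 0%N; rewrite mulr0; apply: R0.
case: pR => _ _ val _ _; have [[n|n] [u [Ru _ ->]]] := val x x0.
  by exists 0%N; rewrite mul1r -exprnP; apply: RM (RX _ (Rnat _)) Ru.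
exists n.+1; rewrite NegzE -exprnN mulrA mulfV ?mul1r //.
by rewrite expf_neq0 // p_neq0.
Qed.

Lemma R_pow_mono k j x : R (pK ^+ k * x) -> R (pK ^+ (k + j) * x).
Proof. by move=> Rx; rewrite exprD mulrAC; apply: RM Rx (RX _ (Rnat _)). Qed.

Lemma exists_pow_R_seq (s : seq K) : exists k : nat, {in s, forall x, R (pK ^+ k * x)}.
Proof.
elim: s => [|y s [k hk]]; first by exists 0%N.
have [j hj] := exists_pow_R y; exists (k + j)%N => x.
by rewrite inE => /predU1P [->|xs]; [rewrite addnC | ]; apply: R_pow_mono => //; apply: hk.
Qed.

Lemma exists_pow_Rmx m n (M : 'M[K]_(m, n)) : exists k : nat, Rmx R (pK ^+ k *: M).
Proof.
have [k hk] := exists_pow_R_seq [seq M ij.1 ij.2 | ij <- enum {: 'I_m * 'I_n}].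
by exists k => i j; rewrite mxE; apply: hk; apply/mapP; exists (i, j); rewrite ?mem_enum.
Qed.

Lemma exists_nat_congr r e : R r -> exists t : nat, R ((r - t%:R) / pK ^+ e).
Proof.
move=> Rr; elim: e => [|e [t Rt]]; first by exists 0%N; rewrite expr0 divr1; apply: RB Rr (Rnat _).
case: pR => _ _ _ residue _; have [n Rn] := residue _ Rt.
exists (t + n * p ^ e)%N.
suff -> : (r - (t + n * p ^ e)%:R) / pK ^+ e.+1 = ((r - t%:R) / pK ^+ e - n%:R) / pK by [].
rewrite natrD natrM natrX exprS; field.
by rewrite expf_neq0 p_neq0.
Qed.

Lemma R_congr_nat (A t e : nat) : A = t %[mod p ^ e] -> R ((A%:R - t%:R) / pK ^+ e).
Proof.
move=> Atmod.
suff -> : (A%:R - t%:R) / pK ^+ e = (A %/ p ^ e)%:R - (t %/ p ^ e)%:R.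
  by apply: RB (Rnat _) (Rnat _).
rewrite {1}(divn_eq A (p ^ e)) {1}(divn_eq t (p ^ e)) Atmod !natrD !natrM natrX; field.
by rewrite ?expf_neq0 // p_neq0.
Qed.

Lemma R_congr_lift (a : K) (t A u e : nat) : coprime p u ->
  R ((a - t%:R) / pK ^+ e) -> A = t %[mod p ^ e] -> R ((A%:R - a) / (u * p ^ e)%:R).
Proof.
move=> cpu Ra Atmod; have [u0 Ru] := coprime_unit cpu.
have pe0 : pK ^+ e != 0 by rewrite expf_neq0 // p_neq0.
have -> : (A%:R - a) / (u * p ^ e)%:R =
    (u%:R)^-1 * ((A%:R - t%:R) / pK ^+ e - (a - t%:R) / pK ^+ e).
  by rewrite natrM natrX; field; rewrite u0 pe0.
by apply: RM Ru (RB (R_congr_nat Atmod) Ra).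
Qed.

Lemma Rmx_mul m n k (A : 'M[K]_(m, n)) (B : 'M[K]_(n, k)) :
  Rmx R A -> Rmx R B -> Rmx R (A *m B).
Proof. by move=> hA hB i j; rewrite mxE; apply: Rsum => l; apply: RM. Qed.
Lemma Rmx_add m n (A B : 'M[K]_(m, n)) : Rmx R A -> Rmx R B -> Rmx R (A + B).
Proof. by move=> hA hB i j; rewrite mxE; apply: RD. Qed.
Lemma Rmx_sub m n (A B : 'M[K]_(m, n)) : Rmx R A -> Rmx R B -> Rmx R (A - B).
Proof. by move=> hA hB i j; rewrite !mxE; apply: RB. Qed.
Lemma Rmx_scale m n c (A : 'M[K]_(m, n)) : R c -> Rmx R A -> Rmx R (c *: A).
Proof. by move=> Rc hA i j; rewrite mxE; apply: RM. Qed.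
Lemma Rmx1 n : Rmx R (1%:M : 'M[K]_n).
Proof. by move=> i j; rewrite mxE; case: (i == j); [apply: R1 | apply: R0]. Qed.

Lemma lattice_integral_basis L : is_lattice R L ->
  exists (G H : 'M[K]_2) (c : K) (e : nat), [/\ c != 0,
    forall v, L v <-> lattice_of R (c *: G) v, Rmx R G, Rmx R H & G *m H = (pK ^+ e)%:M].
Proof.
move=> [g [gU hL]]; have [a Rg] := exists_pow_Rmx g; have [b Rg'] := exists_pow_Rmx (invmx g).
have pa0 : pK ^+ a != 0 by rewrite expf_neq0 // p_neq0.
exists (pK ^+ a *: g), (pK ^+ b *: invmx g), (pK ^+ a)^-1, (a + b)%N; split=> //.
- by rewrite invr_eq0.
- by move=> v; rewrite scalerA mulVf // scale1r.
- by rewrite -scalemxAl -scalemxAr mulmxV // scalerA -exprD scalemx1.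
Qed.

Lemma homothetic_image L (G A U1 U2 : 'M[K]_2) (c s : K) :
  c != 0 -> s != 0 -> (forall v, L v <-> lattice_of R (c *: G) v) ->
  Rmx R U1 -> Rmx R U2 -> A = G *m U1 -> G = A *m U2 ->
  homothetic (mx_image (s *: A) (std_lattice R)) L.
Proof.
move=> c0 s0 hL RU1 RU2 eA eG; exists (c / s); split; first by rewrite mulf_neq0 ?invr_eq0.
move=> v; rewrite hL; split.
  move=> [u [Ru ->]]; exists (s *: A *m (1%:M *m (U2 *m u))); split.
    by exists (1%:M *m (U2 *m u)); split=> //; exists (U2 *m u); split=> //; apply: Rmx_mul.
  by rewrite mul1mx -!scalemxAl scalerA divfK // mulmxA -eG.
move=> [w [[w' [[u [Ru ->]] ->]] ->]]; exists (U1 *m u); split; first exact: Rmx_mul.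
by rewrite mul1mx -!scalemxAl scalerA divfK // eA mulmxA.
Qed.

Hypothesis p_prime : prime p.

Lemma natr_neq0 n : (0 < n)%N -> (n%:R : K) != 0.
Proof.
move=> n0; have [m cpm ->] := pfactor_coprime p_prime n0.
by rewrite natrM natrX mulf_neq0 ?expf_neq0 ?p_neq0 //; case: (coprime_unit cpm).
Qed.

Lemma intr_neq0 (z : int) : z != 0 -> (z%:~R : K) != 0.
Proof.
case: z => n; rewrite ?NegzE ?mulrNz ?oppr_eq0 -pmulrn => nz; apply: natr_neq0 => //.
by rewrite lt0n; apply: contraNneq nz => ->.
Qed.

End PadicField.

(** * The splitting of [H] at [p] *)

Section SplitIso.
Variables (K : fieldType) (R : K -> Prop) (iota : quat -> 'M[K]_2).
Hypothesis iota_split : split_iso R iota.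

Lemma iota1 : iota qone = 1. Proof. by case: iota_split. Qed.
Lemma iotaD x y : iota (qadd x y) = iota x + iota y. Proof. by case: iota_split. Qed.
Lemma iotaM x y : iota (qmul x y) = iota x * iota y. Proof. by case: iota_split. Qed.
Lemma iota_mulmx x y : iota (qmul x y) = iota x *m iota y. Proof. by rewrite iotaM mulmxE. Qed.
Lemma iota_in_O x : in_O x -> Rmx R (iota x).
Proof. by case: iota_split => _ _ _ h _; apply: h. Qed.
Lemma iota_coords M : Rmx R M -> exists a b c d, [/\ R a, R b, R c & R d] /\
  M = a *: iota qone + b *: iota qI + c *: iota qJ + d *: iota qomega.
Proof. by case: iota_split => _ _ _ _ h; apply: h. Qed.

Lemma iota0 : iota qzero = 0.
Proof.
have := iotaD qzero qzero; rewrite qadd0 => e.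
by apply: (addrI (iota qzero)); rewrite addr0 -e.
Qed.

Lemma iotaN x : iota (qneg x) = - iota x.
Proof.
apply/eqP; rewrite -subr_eq0 opprK -iotaD.
by rewrite (_ : qadd (qneg x) x = qzero) ?iota0 //; quat_ring.
Qed.

Lemma iotaB x y : iota (qsub x y) = iota x - iota y.
Proof. by rewrite /qsub iotaD iotaN. Qed.

Lemma iota_scale_int (z : int) x : iota (qscale z%:~R x) = z%:~R *: iota x.
Proof.
have iota_scale_nat n : iota (qscale n%:R x) = n%:R *: iota x.
  elim: n => [|n IH]; first by rewrite (_ : qscale 0%:R x = qzero) ?iota0 ?scale0r //; quat_ring.
  rewrite (_ : qscale n.+1%:R x = qadd (qscale n%:R x) x); last by rewrite -addn1 natrD; quat_ring.
  by rewrite iotaD IH mulrSr scalerDl scale1r.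
case: z => n; first by rewrite -pmulrn iota_scale_nat.
rewrite NegzE mulrNz -pmulrn scaleNr -iota_scale_nat -iotaN; congr iota; quat_ring.
Qed.

Lemma iota_qcomb (a b c d : int) : iota (qcomb a%:~R b%:~R c%:~R d%:~R) =
  a%:~R *: iota qone + b%:~R *: iota qI + c%:~R *: iota qJ + d%:~R *: iota qomega.
Proof. by rewrite /qcomb !iotaD !iota_scale_int addrA. Qed.

Lemma iota_qrat_int (z : int) : iota (qrat z%:~R) = (z%:~R : K)%:M.
Proof.
rewrite (_ : qrat z%:~R = qscale z%:~R qone); last quat_ring.
by rewrite iota_scale_int iota1 scalemx1.
Qed.

Variable p : nat.
Hypotheses (pR : padic_field p R) (p_prime : prime p).

(* [s] is [numq z / denq z], by [Z]-linearity of [iota]. *)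
Lemma iota_qscale (z : rat) : z != 0 ->
  exists s : K, s != 0 /\ forall x, iota (qscale z x) = s *: iota x.
Proof.
move=> z0; set n := numq z; set d := denq z.
have d0 : (d%:~R : K) != 0 by rewrite (intr_neq0 pR p_prime) ?denq_neq0.
have n0 : (n%:~R : K) != 0 by rewrite (intr_neq0 pR p_prime) ?numq_eq0.
exists (n%:~R / d%:~R); split=> [|x]; first by rewrite mulf_neq0 ?invr_eq0.
have iota_z : iota (qrat z) * (d%:~R)%:M = (n%:~R)%:M.
  by rewrite -!iota_qrat_int -iotaM qratM -numqE.
rewrite qscaleE iotaM (_ : iota (qrat z) = (n%:~R / d%:~R)%:M) -?mulmxE ?mul_scalar_mx //.
by rewrite scalar_mxM -iota_z -mulmxE -mulmxA -scalar_mxM mulfV // mulmx1.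
Qed.

End SplitIso.

(** * Strong approximation and the local generator *)

Lemma choice_in (T : seq nat) (A : nat -> Type) (P : forall p, A p -> Prop) :
  (forall p : nat, p \in T -> exists a, P p a) -> (forall p, A p) ->
  exists f : forall p, A p, forall p : nat, p \in T -> P p (f p).
Proof.
move=> hP a0; have hP' p : exists a, p \in T -> P p a.
  by case pT : (p \in T); [have [a ?] := hP p pT; exists a | exists (a0 p)].
exists (fun p => proj1_sig (constructive_indefinite_description _ (hP' p))) => p.
exact: (proj2_sig (constructive_indefinite_description _ (hP' p))).
Qed.

Lemma integral_bases (T : seq nat) (K : nat -> fieldType) (R : forall p, K p -> Prop)
    (L : forall p, 'cV[K p]_2 -> Prop) :
  (forall p : nat, p \in T -> padic_field p (R p)) ->
  (forall p : nat, p \in T -> is_lattice (R p) (L p)) ->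
  exists (G H : forall p, 'M[K p]_2) (c : forall p, K p) (e : nat -> nat),
  forall p : nat, p \in T ->
    [/\ c p != 0, forall v, L p v <-> lattice_of (R p) (c p *: G p) v,
        Rmx (R p) (G p), Rmx (R p) (H p) & G p *m H p = (p%:R ^+ e p)%:M].
Proof.
move=> T_padic T_lattice.
have bases p (pT : p \in T) := lattice_integral_basis (T_padic p pT) (T_lattice p pT).
have [G {}bases] := choice_in bases (fun=> 0).
have [H {}bases] := choice_in bases (fun=> 0).
have [c {}bases] := choice_in bases (fun=> 0).
have [e {}bases] := choice_in bases (fun=> 0%N).
by exists G, H, c, e.
Qed.

Lemma coprime_prime_pow p q k : prime p -> prime q -> p != q -> coprime p (q ^ k).
Proof. by move=> pp pq pq'; rewrite coprimeXr // prime_coprime // dvdn_prime2. Qed.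

Lemma chinese_seq (T : seq nat) (m s : nat -> nat) : uniq T ->
  {in T &, forall q r, q != r -> coprime (m q) (m r)} ->
  exists A, forall q, q \in T -> A = s q %[mod m q].
Proof.
elim: T => [|q T IH] /=; first by exists 0%N.
case/andP=> qT uT cop.
have [A hA] := IH uT (sub_in2 (fun r rT => mem_behead rT) cop).
pose M := (\prod_(r <- T) m r)%N.
have dvdM r : r \in T -> (m r %| M)%N by move=> rT; rewrite /M (big_rem r) //= dvdn_mulr.
have cop_qM : coprime (m q) M.
  rewrite /M big_seq; apply: (big_ind (coprime (m q))) => [|a b ca cb|r rT].
  - exact: coprimen1.
  - by rewrite coprimeMr ca cb.
  - by apply: cop; rewrite ?inE ?eqxx ?rT ?orbT //; apply: contraNneq qT => ->.
exists (chinese (m q) M (s q) A) => r; rewrite inE => /predU1P [->|rT].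
  exact: chinese_modl.
by rewrite -(modn_dvdm _ (dvdM r rT)) chinese_modr // modn_dvdm ?dvdM // hA.
Qed.

Section Approximation.
Variables (T : seq nat) (K : nat -> fieldType) (R : forall p, K p -> Prop).
Arguments R : clear implicits.
Variables (iota : forall p, quat -> 'M[K p]_2) (e : nat -> nat).
Hypotheses (T_uniq : uniq T) (T_prime : {in T, forall p, prime p}).
Hypothesis T_padic : forall p : nat, p \in T -> padic_field p (R p).
Hypothesis T_split : forall p : nat, p \in T -> split_iso (R p) (iota p).

Local Notation N := (\prod_(q <- T) q ^ e q)%N.

Lemma N_gt0 : (0 < N)%N.
Proof. by rewrite big_seq prodn_cond_gt0 // => q /T_prime /prime_gt0 q0; rewrite expn_gt0 q0. Qed.

Lemma N_split p : p \in T -> N = ((\prod_(q <- T | q != p) q ^ e q) * p ^ e p)%N.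
Proof. by move=> pT; rewrite (bigD1_seq p) //= mulnC. Qed.

Lemma coprime_N_split p : p \in T -> coprime p (\prod_(q <- T | q != p) q ^ e q).
Proof.
move=> pT; rewrite big_seq_cond; apply: (big_ind (coprime p)) => [|a b ca cb|q /andP[qT qp]].
- exact: coprimen1.
- by rewrite coprimeMr ca cb.
- by rewrite coprime_prime_pow ?T_prime // eq_sym.
Qed.

Lemma exists_nat_lift (s : nat -> nat) : exists A : nat, forall p : nat, p \in T -> forall a : K p,
  R p ((a - (s p)%:R) / p%:R ^+ e p) -> R p ((A%:R - a) / N%:R).
Proof.
have [A hA] : exists A, forall q, q \in T -> A = s q %[mod q ^ e q].
  apply: chinese_seq => // q r qT rT qr.
  by rewrite coprimeXl // coprime_prime_pow ?T_prime.
exists A => p pT a Ra; rewrite (N_split pT).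
exact: (R_congr_lift (T_padic pT) (coprime_N_split pT) Ra (hA p pT)).
Qed.

Lemma strong_approximation (M : forall p, 'M[K p]_2) :
  (forall p : nat, p \in T -> Rmx (R p) (M p)) ->
  exists y, in_O y /\ forall p : nat, p \in T ->
    exists D, Rmx (R p) D /\ iota p y = M p + N%:R *: D.
Proof.
move=> M_int.
pose congr_to p (a : K p) (t : nat) := R p ((a - t%:R) / p%:R ^+ e p).
have approx p : p \in T -> exists t0 t1 t2 t3 : nat, exists a0 a1 a2 a3 : K p,
    M p = a0 *: iota p qone + a1 *: iota p qI + a2 *: iota p qJ + a3 *: iota p qomega /\
    [/\ congr_to p a0 t0, congr_to p a1 t1, congr_to p a2 t2 & congr_to p a3 t3].
  move=> pT; have [pR hsi] := (T_padic pT, T_split pT).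
  have [a0 [a1 [a2 [a3 [[Ra0 Ra1 Ra2 Ra3] eM]]]]] := iota_coords hsi (M_int p pT).
  have [[t0 h0] [t1 h1]] := (exists_nat_congr pR (e p) Ra0, exists_nat_congr pR (e p) Ra1).
  have [[t2 h2] [t3 h3]] := (exists_nat_congr pR (e p) Ra2, exists_nat_congr pR (e p) Ra3).
  by exists t0, t1, t2, t3, a0, a1, a2, a3.
have [t0 {}approx] := choice_in approx (fun=> 0%N).
have [t1 {}approx] := choice_in approx (fun=> 0%N).
have [t2 {}approx] := choice_in approx (fun=> 0%N).
have [t3 {}approx] := choice_in approx (fun=> 0%N).
have [[A0 h0] [A1 h1]] := (exists_nat_lift t0, exists_nat_lift t1).
have [[A2 h2] [A3 h3]] := (exists_nat_lift t2, exists_nat_lift t3).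
exists (qcomb (Posz A0)%:~R (Posz A1)%:~R (Posz A2)%:~R (Posz A3)%:~R).
split; first by exists A0, A1, A2, A3.
move=> p pT; have [pR hsi] := (T_padic pT, T_split pT).
have [a0 [a1 [a2 [a3 [eM [c0 c1 c2 c3]]]]]] := approx p pT.
pose d (A : nat) (a : K p) : K p := (A%:R - a) / N%:R.
exists (d A0 a0 *: iota p qone + d A1 a1 *: iota p qI + d A2 a2 *: iota p qJ
        + d A3 a3 *: iota p qomega).
split.
  have [O1 OI OJ Oom] := in_O_basis.
  have Rterm A a b : R p (d A a) -> in_O b -> Rmx (R p) (d A a *: iota p b).
    by move=> Rd Ob; exact: (Rmx_scale pR Rd (iota_in_O hsi Ob)).
  exact: (Rmx_add pR (Rmx_add pR (Rmx_add pR (Rterm _ _ _ (h0 p pT _ c0) O1)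
    (Rterm _ _ _ (h1 p pT _ c1) OI)) (Rterm _ _ _ (h2 p pT _ c2) OJ))
    (Rterm _ _ _ (h3 p pT _ c3) Oom)).
have N0 : (N%:R : K p) != 0 by rewrite (natr_neq0 pR (T_prime pT)) ?N_gt0.
by rewrite (iota_qcomb hsi A0 A1 A2 A3) eM -!pmulrn; apply/matrixP => i j; rewrite !mxE /d; field.
Qed.

End Approximation.

Section LocalGenerator.
Variables (T : seq nat) (K : nat -> fieldType) (R : forall p, K p -> Prop).
Arguments R : clear implicits.
Variables (iota : forall p, quat -> 'M[K p]_2) (G H : forall p, 'M[K p]_2) (e : nat -> nat).
Hypotheses (T_uniq : uniq T) (T_prime : {in T, forall p, prime p}).
Hypothesis T_padic : forall p : nat, p \in T -> padic_field p (R p).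
Hypothesis T_split : forall p : nat, p \in T -> split_iso (R p) (iota p).
Hypothesis T_basis : forall p : nat, p \in T ->
  [/\ Rmx (R p) (G p), Rmx (R p) (H p) & G p *m H p = (p%:R ^+ e p)%:M].

Local Notation N := (\prod_(q <- T) q ^ e q)%N.

Definition locally_in_G y :=
  in_O y /\ forall p : nat, p \in T -> exists U, Rmx (R p) U /\ iota p y = G p *m U.

Lemma scalar_N_factor p : p \in T ->
  (N%:R : K p)%:M = G p *m ((\prod_(q <- T | q != p) q ^ e q)%:R *: H p).
Proof.
move=> pT; have [_ _ GH] := T_basis pT.
by rewrite -scalemxAr GH scale_scalar_mx (N_split e T_uniq pT) natrM natrX.
Qed.

Lemma locally_in_G_sub y z : locally_in_G y -> locally_in_G z -> locally_in_G (qsub y z).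
Proof.
move=> [Oy hy] [Oz hz]; split=> [|p pT]; first exact: in_O_sub.
have [[U [RU eU]] [V [RV eV]]] := (hy p pT, hz p pT).
exists (U - V); split; first exact: (Rmx_sub (T_padic pT) RU RV).
by rewrite (iotaB (T_split pT)) eU eV mulmxBr.
Qed.

Lemma locally_in_G_mulr y h : locally_in_G y -> in_O h -> locally_in_G (qmul y h).
Proof.
move=> [Oy hy] Oh; split=> [|p pT]; first exact: in_O_mul.
have [U [RU eU]] := hy p pT.
exists (U *m iota p h); split; first exact: (Rmx_mul (T_padic pT) RU (iota_in_O (T_split pT) Oh)).
by rewrite (iota_mulmx (T_split pT)) eU mulmxA.
Qed.

Lemma locally_in_G_N : locally_in_G (qrat N%:R).
Proof.
split=> [|p pT]; first exact: (in_O_int N).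
have [pR [_ RH _]] := (T_padic pT, T_basis pT).
exists ((\prod_(q <- T | q != p) q ^ e q)%:R *: H p); split.
  exact: (Rmx_scale pR (Rnat pR _) RH).
by rewrite (iota_qrat_int (T_split pT) N) scalar_N_factor.
Qed.

Lemma locally_in_G_approx y : in_O y ->
  (forall p : nat, p \in T -> exists D, Rmx (R p) D /\ iota p y = G p + N%:R *: D) ->
  locally_in_G y.
Proof.
move=> Oy hy; split=> // p pT; have [pR [_ RH _]] := (T_padic pT, T_basis pT).
have [D [RD ->]] := hy p pT.
exists (1%:M + ((\prod_(q <- T | q != p) q ^ e q)%:R *: H p) *m D); split.
  exact (Rmx_add pR (Rmx1 pR (n := 2)) (Rmx_mul pR (Rmx_scale pR (Rnat pR _) RH) RD)).
by rewrite mulmxDr mulmx1 mulmxA -scalar_N_factor // mul_scalar_mx.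
Qed.

(* Both [N] and an approximation [y] of all the [G p] modulo [N] lie in the ideal, so its
   generator [x] divides [N] and [G p = iota p y - N D] lies in [iota p x M_2(Z_p)]. *)
Lemma exists_local_generator : exists x n, [/\ in_O x, qnorm x = n%:R, (n %| N ^ 2)%N &
  forall p : nat, p \in T -> exists U1 U2, [/\ Rmx (R p) U1, Rmx (R p) U2,
    iota p x = G p *m U1 & G p = iota p x *m U2]].
Proof.
have [y [Oy hy]] := strong_approximation e T_uniq T_prime T_padic T_split
  (fun p pT => let: And3 RG _ _ := T_basis pT in RG).
have N0 : qrat N%:R <> qzero.
  move=> /(congr1 q0) /= /eqP; rewrite pnatr_eq0 => /eqP N0.
  by have := N_gt0 e T_prime; rewrite N0.
have [x [[Ox x_loc] gen]] := @hurwitz_ideal_principal locally_in_G _ (fun _ => @proj1 _ _)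
  locally_in_G_sub locally_in_G_mulr locally_in_G_N N0.
have [[hy' [Ohy ey]] [hN [OhN eN]]] := (gen y (locally_in_G_approx Oy hy), gen _ locally_in_G_N).
have [[n nx] [m nhN]] := (qnorm_in_O Ox, qnorm_in_O OhN).
exists x, n; split=> //.
  apply/dvdnP; exists m; apply/eqP.
  by rewrite -(eqr_nat rat) natrM natrX -nx -nhN mulrC -qnormM -eN qnorm_rat.
move=> p pT; have [pR hsi] := (T_padic pT, T_split pT).
have [[U1 [RU1 eU1]] [D [RD eD]]] := (x_loc p pT, hy p pT).
exists U1, (iota p hy' - iota p hN *m D); split=> //.
  exact: (Rmx_sub pR (iota_in_O hsi Ohy) (Rmx_mul pR (iota_in_O hsi OhN) RD)).
have ND : N%:R *: D = iota p x *m (iota p hN *m D).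
  by rewrite mulmxA -(iota_mulmx hsi) -eN (iota_qrat_int hsi N) mul_scalar_mx.
by rewrite mulmxBr -ND -(iota_mulmx hsi) -ey eD addrK.
Qed.

End LocalGenerator.

Theorem theorem2p1 (S : seq nat) (K : nat -> fieldType) (R : forall p, K p -> Prop)
    (iota : forall p, quat -> 'M[K p]_2) :
  (forall p, p \in S -> prime p) ->
  (forall p, p \in S -> odd p -> padic_field p (R p)) ->
  (forall p, p \in S -> odd p -> split_iso (R p) (iota p)) ->
  forall L : forall p, 'cV[K p]_2 -> Prop,
    (forall p, p \in S -> odd p -> is_lattice (R p) (L p)) ->
    exists gamma, in_Gamma S gamma /\
      forall p, p \in S -> odd p ->
        homothetic (mx_image (iota p gamma) (std_lattice (R p))) (L p) /\
        (* the class of gamma in Gamma_S / Z_S^* acts the same way *)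
        forall z : rat, z != 0 -> in_ZS S z -> in_ZS S z^-1 ->
          homothetic (mx_image (iota p (qscale z gamma)) (std_lattice (R p))) (L p).
Proof.
move=> S_prime S_padic S_split L S_lattice.
pose T := [seq q <- undup S | odd q].
have memT q : (q \in T) = (q \in S) && odd q by rewrite mem_filter mem_undup andbC.
have T_uniq : uniq T by rewrite filter_uniq ?undup_uniq.
have T_sub : {subset T <= S} by move=> q; rewrite memT => /andP[].
have T_prime : {in T, forall p, prime p} by move=> q /T_sub /S_prime.
have [T_padic T_split T_lattice] : [/\ forall p : nat, p \in T -> padic_field p (R p),
    forall p : nat, p \in T -> split_iso (R p) (iota p)
  & forall p : nat, p \in T -> is_lattice (R p) (L p)].
  by split=> p; rewrite memT => /andP[]; [apply: S_padic | apply: S_split | apply: S_lattice].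
have [G [H [c [e bases]]]] := integral_bases T_padic T_lattice.
have [x [n [Ox nx ndvd x_loc]]] := exists_local_generator T_uniq T_prime T_padic T_split
  (fun p pT => let: And5 _ _ RG RH GH := bases p pT in And3 RG RH GH).
have N_dvd : ((\prod_(q <- T) q ^ e q) ^ 2 %| mS S ^ ((\sum_(q <- T) e q) * 2))%N.
  by rewrite expnM dvdn_exp2r // dvdn_prod_mS.
exists x; split; first exact: hurwitz_S_unit (mS_gt0 S_prime) Ox nx (dvdn_trans ndvd N_dvd).
move=> p pS po; have pT : p \in T by rewrite memT pS po.
have [[c0 hL _ _ _] [U1 [U2 [RU1 RU2 eU1 eU2]]]] := (bases p pT, x_loc p pT).
have image_of_x := homothetic_image (T_padic p pT) c0 _ hL RU1 RU2 eU1 eU2.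
split; first by rewrite -[iota p x]scale1r; apply: image_of_x; rewrite oner_neq0.
move=> z z0 _ _; have [s [s0 ->]] := iota_qscale (T_split p pT) (T_padic p pT) (T_prime p pT) z0.
exact: image_of_x.
Qed.
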